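(* Let $P_1$ be the uniform distribution on $[0,\frac12]$, let $P_2$ be the uniform distribution on $[\frac34,1]$, and let $P=\frac34P_1+\frac14P_2$. For $n\ge 2$, let $\alpha_n$ be an optimal set of $n$-means for $P$. Then $\alpha_n$ does not contain any point from the open interval $(\frac12,\frac34)$.
   Context: For a finite set $\alpha\subset\mathbb R$, $V(P;\alpha)=\int\min_{a\in\alpha}(x-a)^2\,dP(x)$; $V_n=\inf\{V(P;\alpha):\mathrm{card}(\alpha)\le n\}$; an optimal set of $n$-means is a set $\alpha$ with $\mathrm{card}(\alpha)\le n$ and $V(P;\alpha)=V_n$. *)

From Stdlib Require Import Reals List.
From Coquelicot Require Import Coquelicot.
Open Scope R_scope.

Fixpoint mindist (alpha : list R) (x : R) : R :=
  match alpha with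
  | nil => 0
  | a :: nil => (x - a) ^ 2
  | a :: l => Rmin ((x - a) ^ 2) (mindist l x)
  end.

(* Expectation under P1 = uniform on [0,1/2] (density 2) and
   P2 = uniform on [3/4,1] (density 4). *)
Definition E_P1 (f : R -> R) : R := 2 * RInt f 0 (1/2).
Definition E_P2 (f : R -> R) : R := 4 * RInt f (3/4) 1.
Definition E_P (f : R -> R) : R := 3/4 * E_P1 f + 1/4 * E_P2 f.

Definition V (alpha : list R) : R := E_P (mindist alpha).

(* alpha represents a finite set with card(alpha) <= n.  The empty set
   (V = +infinity) is excluded; it never attains the infimum. *)
Definition admissible (n : nat) (alpha : list R) : Prop :=
  alpha <> nil /\ NoDup alpha /\ (length alpha <= n)%nat.

Definition Vn (n : nat) : Rbar :=
  Glb_Rbar (fun v => exists beta, admissible n beta /\ v = V beta).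

Definition optimal_n_means (n : nat) (alpha : list R) : Prop :=
  admissible n alpha /\ Finite (V alpha) = Vn n.

From Stdlib Require Import Reals List Lra Psatz.
From Coquelicot Require Import Coquelicot.
Open Scope R_scope.

(** Let [a] be a point of an optimal set [alpha] lying in (1/2, 3/4), with Voronoi cell
    [[l, r]].  Comparing [alpha] with the sets obtained by moving one of its points gives:
    the cell of [a] carries mass (otherwise moving [a] into a gap of [alpha] inside
    [[3/4, 7/8]] lowers the error); [a] is the centroid of the mass in its cell; the left
    neighbour of [a] lies in the upper half of [[0, l]] and, if [r < 1], the right
    neighbour lies in the lower half of [[r, 1]].  With these bounds the centroid
    equation is contradictory unless [0 < l] and [r < 1]; in that last case the cell
    captures so little of [[0, 1/2]] that moving [a] to the midpoint of [[3/4, r]],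
    leaving [[l, 1/2]] to the left neighbour, would lower the error. *)

Lemma closer_right p q x : p <= q -> p + q <= 2 * x -> (x - q) ^ 2 <= (x - p) ^ 2.
Proof. intros; nra. Qed.

Lemma closer_left p q x : q <= p -> 2 * x <= p + q -> (x - q) ^ 2 <= (x - p) ^ 2.
Proof. intros; nra. Qed.

Lemma weighted_sum_pos w1 w2 y1 y2 :
  0 <= w1 -> 0 <= w2 -> 0 < w1 + w2 -> (0 < w1 -> 0 < y1) -> (0 < w2 -> 0 < y2) ->
  0 < w1 * y1 + w2 * y2.
Proof.
  intros Hw1 Hw2 Hw H1 H2.
  destruct (Req_dec w1 0) as [->|]; destruct (Req_dec w2 0) as [->|]; try lra.
  - specialize (H2 ltac:(lra)). nra.
  - specialize (H1 ltac:(lra)). nra.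
  - specialize (H1 ltac:(lra)). specialize (H2 ltac:(lra)). nra.
Qed.

Lemma mindist_cons a l x :
  l <> nil -> mindist (a :: l) x = Rmin ((x - a) ^ 2) (mindist l x).
Proof. destruct l; [congruence | reflexivity]. Qed.

Lemma mindist_le l p x : In p l -> mindist l x <= (x - p) ^ 2.
Proof.
  induction l as [|a [|a' l'] IH]; intros Hp; [destruct Hp| |].
  - destruct Hp as [<-|[]]; simpl; lra.
  - rewrite mindist_cons by discriminate.
    destruct Hp as [<-|Hp]; [apply Rmin_l|].
    eapply Rle_trans; [apply Rmin_r | now apply IH].
Qed.

Lemma mindist_attained l x : l <> nil -> exists p, In p l /\ mindist l x = (x - p) ^ 2.
Proof.
  induction l as [|a [|a' l'] IH]; intros Hl; [congruence| |].
  - exists a; simpl; auto.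
  - rewrite mindist_cons by discriminate.
    destruct IH as [p [Hp ->]]; [discriminate|].
    unfold Rmin; destruct (Rle_dec _ _); [exists a | exists p]; simpl; auto.
Qed.

Lemma mindist_nearest l p x :
  In p l -> (forall q, In q l -> (x - p) ^ 2 <= (x - q) ^ 2) -> mindist l x = (x - p) ^ 2.
Proof.
  intros Hp Hnear. apply Rle_antisym; [now apply mindist_le|].
  destruct (mindist_attained l x) as [q [Hq ->]]; [now intros ->|].
  now apply Hnear.
Qed.

Lemma continuous_Rmin (f g : R -> R) x :
  continuous f x -> continuous g x -> continuous (fun y => Rmin (f y) (g y)) x.
Proof.
  intros Hf%continuity_pt_filterlim Hg%continuity_pt_filterlim.
  apply (continuous_ext (fun y => (f y + g y - Rabs (f y - g y)) * / 2)).
  { intros y. unfold Rmin. destruct (Rle_dec (f y) (g y));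
      [rewrite Rabs_left1 | rewrite Rabs_right]; lra. }
  apply continuity_pt_filterlim, continuity_pt_mult; [|apply continuity_pt_const; now intros ? ?].
  apply continuity_pt_minus; [now apply continuity_pt_plus|].
  apply (continuity_pt_comp (fun y => f y - g y) Rabs);
    [now apply continuity_pt_minus | apply Rcontinuity_abs].
Qed.

Lemma continuous_sq_sub p x : continuous (fun y => (y - p) ^ 2) x.
Proof. apply (@ex_derive_continuous R_AbsRing R_NormedModule). auto_derive; auto. Qed.

Lemma continuous_sub (f g : R -> R) x :
  continuous f x -> continuous g x -> continuous (fun y => f y - g y) x.
Proof. apply (@continuous_minus R_UniformSpace R_AbsRing R_NormedModule). Qed.

Lemma continuous_mindist l x : continuous (mindist l) x.
Proof.
  induction l as [|a [|a' l'] IH].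
  - apply continuous_const.
  - apply continuous_sq_sub.
  - apply (continuous_ext (fun y => Rmin ((y - a) ^ 2) (mindist (a' :: l') y))).
    { intros y. symmetry. now apply mindist_cons. }
    apply continuous_Rmin; [apply continuous_sq_sub | exact IH].
Qed.

Lemma ex_RInt_cont (f : R -> R) lo hi : (forall x, continuous f x) -> ex_RInt f lo hi.
Proof. intros Hf. apply (@ex_RInt_continuous R_CompleteNormedModule). auto. Qed.

Lemma RInt_split (f : R -> R) lo m hi :
  (forall x, continuous f x) -> RInt f lo hi = RInt f lo m + RInt f m hi.
Proof. intros Hf. symmetry. apply (RInt_Chasles f lo m hi); now apply ex_RInt_cont. Qed.

Lemma RInt_le_cont (f g : R -> R) lo hi :
  lo <= hi -> (forall x, continuous f x) -> (forall x, continuous g x) ->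
  (forall x, lo < x < hi -> f x <= g x) -> RInt f lo hi <= RInt g lo hi.
Proof. intros. apply RInt_le; auto; now apply ex_RInt_cont. Qed.

Lemma RInt_le_const (f : R -> R) k lo hi :
  lo <= hi -> (forall x, continuous f x) -> (forall x, lo < x < hi -> f x <= k) ->
  RInt f lo hi <= k * (hi - lo).
Proof.
  intros Hlh Hf Hle.
  replace (k * (hi - lo)) with (RInt (fun _ => k) lo hi) by (rewrite RInt_const; apply Rmult_comm).
  apply RInt_le_cont; auto. intros; apply continuous_const.
Qed.

Lemma RInt_nonpos (f : R -> R) lo hi :
  lo <= hi -> (forall x, continuous f x) -> (forall x, lo < x < hi -> f x <= 0) ->
  RInt f lo hi <= 0.
Proof. intros. rewrite <- (Rmult_0_l (hi - lo)). now apply RInt_le_const. Qed.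

Lemma RInt_antiderivative (F f : R -> R) lo hi :
  (forall x, is_derive F x (f x)) -> (forall x, continuous f x) ->
  RInt f lo hi = F hi - F lo.
Proof.
  intros HF Hf. apply (@is_RInt_unique R_CompleteNormedModule).
  apply (@is_RInt_derive R_CompleteNormedModule); auto.
Qed.

Definition sqdiff_integral p q lo hi := (q - p) * (hi * hi - lo * lo - (p + q) * (hi - lo)).

Lemma RInt_sq_sub_sq p q lo hi :
  RInt (fun x => (x - p) ^ 2 - (x - q) ^ 2) lo hi = sqdiff_integral p q lo hi.
Proof.
  rewrite (RInt_antiderivative (fun x => (q - p) * (x * x - (p + q) * x))).
  - unfold sqdiff_integral. simpl. ring.
  - intros x. auto_derive; auto. ring.
  - intros x. apply continuous_sub; apply continuous_sq_sub.
Qed.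

Lemma RInt_le_sqdiff (f : R -> R) p q lo hi :
  lo <= hi -> (forall x, continuous f x) ->
  (forall x, lo < x < hi -> f x <= (x - p) ^ 2 - (x - q) ^ 2) ->
  RInt f lo hi <= sqdiff_integral p q lo hi.
Proof.
  intros Hlh Hf Hle. rewrite <- RInt_sq_sub_sq. apply RInt_le_cont; auto.
  intros x. apply continuous_sub; apply continuous_sq_sub.
Qed.

Definition excess (beta alpha : list R) (x : R) := mindist beta x - mindist alpha x.

Lemma continuous_excess beta alpha x : continuous (excess beta alpha) x.
Proof. apply continuous_sub; apply continuous_mindist. Qed.

Lemma V_sub beta alpha :
  V beta - V alpha = 3/2 * RInt (excess beta alpha) 0 (1/2) + RInt (excess beta alpha) (3/4) 1.
Proof.
  assert (E : forall lo hi,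
    RInt (excess beta alpha) lo hi = RInt (mindist beta) lo hi - RInt (mindist alpha) lo hi).
  { intros. apply (RInt_minus (mindist beta) (mindist alpha));
      apply ex_RInt_cont, continuous_mindist. }
  unfold V, E_P, E_P1, E_P2. rewrite !E. lra.
Qed.

Lemma optimal_V_le n alpha beta :
  optimal_n_means n alpha -> admissible n beta -> V alpha <= V beta.
Proof.
  intros [_ Hopt] Hbeta.
  destruct (Glb_Rbar_correct (fun v => exists beta, admissible n beta /\ v = V beta)) as [Hlb _].
  specialize (Hlb (V beta) (ex_intro _ beta (conj Hbeta eq_refl))).
  unfold Vn in Hopt. now rewrite <- Hopt in Hlb.
Qed.

Definition replace_point (old new : R) (l : list R) := new :: remove Req_dec_T old l.

Lemma NoDup_remove_elt (l : list R) x : NoDup l -> NoDup (remove Req_dec_T x l).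
Proof.
  induction l as [|a l IH]; intros Hnd; simpl; [constructor|].
  inversion Hnd as [|? ? Ha Hl]; subst. destruct (Req_dec_T x a); [auto|].
  constructor; [intros Hin%in_remove; tauto | auto].
Qed.

Lemma admissible_replace_point n l old new :
  admissible n l -> In old l -> ~ In new l -> admissible n (replace_point old new l).
Proof.
  intros [_ [Hnd Hlen]] Hold Hnew. split; [discriminate|split].
  - constructor; [intros Hin%in_remove; tauto | now apply NoDup_remove_elt].
  - simpl. pose proof (remove_length_lt Req_dec_T l old Hold). lia.
Qed.

Lemma mindist_replace_new old new l x : mindist (replace_point old new l) x <= (x - new) ^ 2.
Proof. apply mindist_le. now left. Qed.

Lemma mindist_replace_other old new l q x :
  In q l -> q <> old -> mindist (replace_point old new l) x <= (x - q) ^ 2.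
Proof. intros. apply mindist_le. right. now apply in_in_remove. Qed.

Lemma excess_replace_nonpos old new l q x :
  In q l -> q <> old -> (x - q) ^ 2 <= (x - old) ^ 2 -> excess (replace_point old new l) l x <= 0.
Proof.
  intros Hq Hqo Hle. unfold excess.
  destruct (mindist_attained l x) as [p [Hp ->]]; [now intros ->|].
  destruct (Req_dec_T p old) as [->|Hpo].
  - pose proof (mindist_replace_other old new l q x Hq Hqo). lra.
  - pose proof (mindist_replace_other old new l p x Hp Hpo). lra.
Qed.

Lemma excess_replace_le old new l x :
  In old l -> (x - old) ^ 2 <= (x - new) ^ 2 ->
  excess (replace_point old new l) l x <= (x - new) ^ 2 - (x - old) ^ 2.
Proof.
  intros Hold Hle. unfold excess.
  destruct (mindist_attained l x) as [p [Hp ->]]; [now intros ->|].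
  destruct (Req_dec_T p old) as [->|Hpo].
  - pose proof (mindist_replace_new old new l x). lra.
  - pose proof (mindist_replace_other old new l p x Hp Hpo). lra.
Qed.

Lemma optimal_replace_excess n alpha old new :
  optimal_n_means n alpha -> In old alpha -> ~ In new alpha ->
  0 <= 3/2 * RInt (excess (replace_point old new alpha) alpha) 0 (1/2)
       + RInt (excess (replace_point old new alpha) alpha) (3/4) 1.
Proof.
  intros Hopt Hold Hnew. rewrite <- V_sub.
  enough (V alpha <= V (replace_point old new alpha)) by lra.
  apply (optimal_V_le n); [exact Hopt|].
  now apply admissible_replace_point; [apply Hopt| |].
Qed.

Lemma nearest_below (l : list R) y :
  (exists b, In b l /\ b < y /\ forall p, In p l -> p < y -> p <= b) \/
  (forall p, In p l -> y <= p).
Proof.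
  induction l as [|a l [[b [Hb [Hby Hmax]]] | Hnone]].
  - right. intros p [].
  - left. destruct (Rlt_dec a y).
    + exists (Rmax a b). split; [unfold Rmax; destruct (Rle_dec a b); simpl; auto|].
      split; [now apply Rmax_lub_lt|].
      intros p [<-|Hp] Hpy; [apply Rmax_l | eapply Rle_trans; [apply Hmax; auto | apply Rmax_r]].
    + exists b. split; [now right|]. split; [exact Hby|].
      intros p [<-|Hp] Hpy; [lra | auto].
  - destruct (Rlt_dec a y).
    + left. exists a. split; [now left|]. split; [exact r|].
      intros p [<-|Hp] Hpy; [lra | specialize (Hnone p Hp); lra].
    + right. intros p [<-|Hp]; [lra | auto].
Qed.

Lemma nearest_above (l : list R) y :
  (exists c, In c l /\ y < c /\ forall p, In p l -> y < p -> c <= p) \/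
  (forall p, In p l -> p <= y).
Proof.
  induction l as [|a l [[c [Hc [Hyc Hmin]]] | Hnone]].
  - right. intros p [].
  - left. destruct (Rlt_dec y a).
    + exists (Rmin a c). split; [unfold Rmin; destruct (Rle_dec a c); simpl; auto|].
      split; [now apply Rmin_glb_lt|].
      intros p [<-|Hp] Hpy; [apply Rmin_l | eapply Rle_trans; [apply Rmin_r | apply Hmin; auto]].
    + exists c. split; [now right|]. split; [exact Hyc|].
      intros p [<-|Hp] Hpy; [lra | auto].
  - destruct (Rlt_dec y a).
    + left. exists a. split; [now left|]. split; [exact r|].
      intros p [<-|Hp] Hpy; [lra | specialize (Hnone p Hp); lra].
    + right. intros p [<-|Hp]; [lra | auto].
Qed.

Lemma exists_gap (l : list R) lo hi :
  lo < hi -> exists u, lo <= u < hi /\ forall p, In p l -> p <= u \/ hi <= p.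
Proof.
  intros Hlh. destruct (nearest_below l hi) as [[b [_ [Hb Hmax]]] | Hnone].
  - exists (Rmax lo b). split; [split; [apply Rmax_l | now apply Rmax_lub_lt]|].
    intros p Hp. destruct (Rlt_dec p hi); [left | right; lra].
    eapply Rle_trans; [apply Hmax; auto | apply Rmax_r].
  - exists lo. split; [lra|]. intros p Hp. right. auto.
Qed.

Lemma left_cell_boundary (l : list R) a lo :
  exists m, m < a /\ (forall p, In p l -> p < a -> p <= 2 * m - a) /\
            (lo <= m -> In (2 * m - a) l).
Proof.
  destruct (nearest_below l a) as [[b [Hb [Hba Hmax]]] | Hnone].
  - exists ((a + b) / 2). replace (2 * ((a + b) / 2) - a) with b by field.
    split; [lra|]. auto.
  - exists (Rmin (lo - 1) (a - 1)).
    pose proof (Rmin_l (lo - 1) (a - 1)). pose proof (Rmin_r (lo - 1) (a - 1)).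
    split; [lra|]. split; [intros p Hp Hpa; specialize (Hnone p Hp); lra | lra].
Qed.

Lemma right_cell_boundary (l : list R) a hi :
  exists m, a < m /\ (forall p, In p l -> a < p -> 2 * m - a <= p) /\
            (m <= hi -> In (2 * m - a) l).
Proof.
  destruct (nearest_above l a) as [[c [Hc [Hac Hmin]]] | Hnone].
  - exists ((a + c) / 2). replace (2 * ((a + c) / 2) - a) with c by field.
    split; [lra|]. auto.
  - exists (Rmax (hi + 1) (a + 1)).
    pose proof (Rmax_l (hi + 1) (a + 1)). pose proof (Rmax_r (hi + 1) (a + 1)).
    split; [lra|]. split; [intros p Hp Hpa; specialize (Hnone p Hp); lra | lra].
Qed.

Lemma two_sided_cell_absurd a l r :
  1/2 < a < 3/4 -> 0 < l < 1/2 -> 3/4 < r < 1 ->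
  a * (3/2 * (1/2 - l) + (r - 3/4)) = (3/2 * (1/4 - l * l) + (r * r - 9/16)) / 2 ->
  2 * r - a <= (r + 1) / 2 ->
  0 <= 3/2 * sqdiff_integral (2 * l - a) a l (1/2) + sqdiff_integral ((3/4 + r) / 2) a (3/4) r ->
  False.
Proof.
  intros Ha Hl Hr Hcentroid Hc Hmove. unfold sqdiff_integral in Hmove.
  set (u := 1/2 - l) in *. set (v := r - 3/4) in *.
  (* The two parts of the cell of [a] have masses [3/2 u] and [v], and [d], [e] are the
     distances from [a] to their centroids. *)
  set (d := a - (1/2 + l) / 2). set (e := (3/4 + r) / 2 - a).
  assert (Hu : 0 < u < 1/2) by (unfold u; lra).
  assert (Hv : 0 < v) by (unfold v; lra).
  assert (Hd : 1/8 + 3/2 * v <= d) by (unfold d, u, v in *; lra).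
  assert (He : e <= 1/8 - v) by (unfold e, v; lra).
  assert (Hbalance : 3/2 * u * d = v * e).
  { unfold d, e, u, v in *. nra. }
  assert (Hmove' : v * e ^ 2 <= 3 * u ^ 2 * (d + u / 2)).
  { unfold d, e, u, v in *. nra. }
  assert (He0 : 0 < e) by nra.
  assert (Hud : u * d <= v / 12) by nra.
  assert (Hsq : 3 * d ^ 2 <= 4 * v * d + 2 * u * v).
  { assert (H : (3/2 * u * d) ^ 2 <= v * (3 * u ^ 2 * (d + u / 2))).
    { rewrite Hbalance. replace ((v * e) ^ 2) with (v * (v * e ^ 2)) by ring.
      apply Rmult_le_compat_l; lra. }
    assert (Hu2 : 0 < 3/4 * u ^ 2) by nra.
    apply (Rmult_le_reg_l (3/4 * u ^ 2)); [exact Hu2 | nra]. }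
  nra.
Qed.

Section VoronoiCell.

Variables (n : nat) (alpha : list R) (a l r : R).

(* [[l, r]] is the Voronoi cell of [a]: its neighbours in [alpha] are [2 l - a] and
   [2 r - a], which are only required to exist when the corresponding cell boundary lies
   in the support [[0, 1]]. *)
Hypothesis alpha_opt : optimal_n_means n alpha.
Hypothesis a_in : In a alpha.
Hypothesis a_gap : 1/2 < a < 3/4.
Hypothesis l_lt_a : l < a.
Hypothesis a_lt_r : a < r.
Hypothesis alpha_outside_cell :
  forall p, In p alpha -> p <= 2 * l - a \/ p = a \/ 2 * r - a <= p.
Hypothesis left_in : 0 <= l -> In (2 * l - a) alpha.
Hypothesis right_in : r <= 1 -> In (2 * r - a) alpha.

(* The cell of [a] meets the support of P in [[lc, 1/2] ∪ [3/4, rc]]. *)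
Let lc := Rmax 0 (Rmin l (1/2)).
Let rc := Rmin 1 (Rmax r (3/4)).

Lemma lc_spec : 0 <= lc <= 1/2 /\ (lc < 1/2 -> l <= lc) /\ (0 < lc -> lc <= l).
Proof. unfold lc, Rmax, Rmin. repeat destruct Rle_dec; lra. Qed.

Lemma rc_spec : 3/4 <= rc <= 1 /\ (3/4 < rc -> rc <= r) /\ (rc < 1 -> r <= rc).
Proof. unfold rc, Rmax, Rmin. repeat destruct Rle_dec; lra. Qed.

Lemma cell_nearest x : l <= x <= r -> forall p, In p alpha -> (x - a) ^ 2 <= (x - p) ^ 2.
Proof.
  intros Hx p Hp. destruct (alpha_outside_cell p Hp) as [Hp'|[->|Hp']].
  - apply closer_right; lra.
  - lra.
  - apply closer_left; lra.
Qed.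

Lemma not_in_cell x : 2 * l - a < x < 2 * r - a -> x <> a -> ~ In x alpha.
Proof. intros Hx Hxa Hin. destruct (alpha_outside_cell x Hin) as [|[|]]; lra. Qed.

Lemma move_a_excess a' p1 p2 :
  2 * l - a < a' < 2 * r - a -> a' <> a ->
  (forall x, lc < x < 1/2 -> mindist (replace_point a a' alpha) x <= (x - p1) ^ 2) ->
  (forall x, 3/4 < x < rc -> mindist (replace_point a a' alpha) x <= (x - p2) ^ 2) ->
  0 <= 3/2 * sqdiff_integral p1 a lc (1/2) + sqdiff_integral p2 a (3/4) rc.
Proof.
  intros Ha' Hne H1 H2.
  destruct lc_spec as [Hlc [Hlc1 Hlc2]]. destruct rc_spec as [Hrc [Hrc1 Hrc2]].
  pose proof (optimal_replace_excess n alpha a a' alpha_opt a_in (not_in_cell a' Ha' Hne)) as E.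
  set (D := excess (replace_point a a' alpha) alpha) in *.
  assert (DC : forall x, continuous D x) by (intros; apply continuous_excess).
  rewrite (RInt_split D 0 lc (1/2)), (RInt_split D (3/4) rc 1) in E by exact DC.
  assert (I1 : RInt D 0 lc <= 0).
  { apply RInt_nonpos; [lra | exact DC|]. intros x Hx.
    apply (excess_replace_nonpos a a' alpha (2 * l - a)); [apply left_in; lra | lra |].
    apply closer_left; lra. }
  assert (I2 : RInt D lc (1/2) <= sqdiff_integral p1 a lc (1/2)).
  { apply RInt_le_sqdiff; [lra | exact DC|]. intros x Hx. unfold D, excess.
    rewrite (mindist_nearest alpha a x a_in) by (apply cell_nearest; lra).
    specialize (H1 x Hx). lra. }
  assert (I3 : RInt D (3/4) rc <= sqdiff_integral p2 a (3/4) rc).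
  { apply RInt_le_sqdiff; [lra | exact DC|]. intros x Hx. unfold D, excess.
    rewrite (mindist_nearest alpha a x a_in) by (apply cell_nearest; lra).
    specialize (H2 x Hx). lra. }
  assert (I4 : RInt D rc 1 <= 0).
  { apply RInt_nonpos; [lra | exact DC|]. intros x Hx.
    apply (excess_replace_nonpos a a' alpha (2 * r - a)); [apply right_in; lra | lra |].
    apply closer_right; lra. }
  lra.
Qed.

Lemma a_centroid :
  0 < 3/2 * (1/2 - lc) + (rc - 3/4) ->
  a * (3/2 * (1/2 - lc) + (rc - 3/4)) = (3/2 * (1/4 - lc * lc) + (rc * rc - 9/16)) / 2.
Proof.
  intros HM.
  destruct lc_spec as [Hlc [Hlc1 Hlc2]]. destruct rc_spec as [Hrc [Hrc1 Hrc2]].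
  set (M := 3/2 * (1/2 - lc) + (rc - 3/4)) in *.
  set (N := 3/2 * (1/4 - lc * lc) + (rc * rc - 9/16)).
  set (m := N / (2 * M)).
  assert (Hm : 2 * M * m = N) by (unfold m; field; lra).
  destruct (Req_dec a m) as [->|Hne]; [lra|]. exfalso.
  assert (Hlo : 2 * l - a < m).
  { apply (Rmult_lt_reg_l (2 * M)); [lra|]. rewrite Hm.
    enough (0 < 3/2 * (1/2 - lc) * (1/2 + lc - 2 * (2 * l - a))
                + (rc - 3/4) * (rc + 3/4 - 2 * (2 * l - a))) by (unfold N, M in *; nra).
    apply weighted_sum_pos; unfold M in HM; lra. }
  assert (Hhi : m < 2 * r - a).
  { apply (Rmult_lt_reg_l (2 * M)); [lra|]. rewrite Hm.
    enough (0 < 3/2 * (1/2 - lc) * (2 * (2 * r - a) - 1/2 - lc)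
                + (rc - 3/4) * (2 * (2 * r - a) - rc - 3/4)) by (unfold N, M in *; nra).
    apply weighted_sum_pos; unfold M in HM; lra. }
  assert (H := move_a_excess m m m (conj Hlo Hhi) (not_eq_sym Hne)
                 (fun x _ => mindist_replace_new a m alpha x)
                 (fun x _ => mindist_replace_new a m alpha x)).
  replace (3/2 * sqdiff_integral m a lc (1/2) + sqdiff_integral m a (3/4) rc)
    with ((a - m) * (N - (m + a) * M)) in H by (unfold sqdiff_integral, N, M; field).
  rewrite <- Hm in H.
  replace ((a - m) * (2 * M * m - (m + a) * M)) with (- (M * (a - m) ^ 2)) in H by ring.
  assert (0 < M * (a - m) ^ 2) by (apply Rmult_lt_0_compat; [lra | nra]).
  lra.
Qed.

Lemma cell_meets_support : l < 1/2 \/ 3/4 < r.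
Proof.
  destruct (Rlt_dec l (1/2)) as [|Hl]; [now left|].
  destruct (Rlt_dec (3/4) r) as [|Hr]; [now right|]. exfalso.
  assert (Hb : In (2 * l - a) alpha) by (apply left_in; lra).
  assert (Hc : In (2 * r - a) alpha) by (apply right_in; lra).
  destruct (exists_gap alpha (3/4) (7/8)) as [u [Hu Hgap]]; [lra|].
  set (h := 7/8 - u). set (t := u + h / 2).
  assert (Ht : ~ In t alpha) by (intros Hin; destruct (Hgap t Hin); unfold t, h in *; lra).
  pose proof (optimal_replace_excess n alpha a t alpha_opt a_in Ht) as E.
  set (D := excess (replace_point a t alpha) alpha) in *.
  assert (DC : forall x, continuous D x) by (intros; apply continuous_excess).
  assert (Hc_closer : forall x, 3/4 < x -> D x <= 0).
  { intros x Hx. apply (excess_replace_nonpos a t alpha (2 * r - a)); [exact Hc | lra |].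
    apply closer_right; lra. }
  rewrite (RInt_split D (3/4) (t - h / 8) 1), (RInt_split D (t - h / 8) (t + h / 8) 1) in E
    by exact DC.
  assert (I1 : RInt D 0 (1/2) <= 0).
  { apply RInt_nonpos; [lra | exact DC|]. intros x Hx.
    apply (excess_replace_nonpos a t alpha (2 * l - a)); [exact Hb | lra |].
    apply closer_left; lra. }
  assert (I2 : RInt D (3/4) (t - h / 8) <= 0).
  { apply RInt_nonpos; [unfold t, h; lra | exact DC|]. intros x Hx. apply Hc_closer; lra. }
  assert (I3 : RInt D (t - h / 8) (t + h / 8) <= - (h * h / 8) * (t + h / 8 - (t - h / 8))).
  { apply RInt_le_const; [unfold h; lra | exact DC|]. intros x Hx. unfold D, excess.
    pose proof (mindist_replace_new a t alpha x).
    destruct (mindist_attained alpha x) as [p [Hp ->]]; [now intros ->|].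
    assert (3 * h / 8 <= Rabs (x - p)).
    { destruct (Hgap p Hp); [rewrite Rabs_right | rewrite Rabs_left1]; unfold t, h in *; lra. }
    assert ((x - t) ^ 2 <= (h / 8) ^ 2) by (apply pow_maj_Rabs, Rabs_le; lra).
    assert ((3 * h / 8) ^ 2 <= (x - p) ^ 2)
      by (rewrite <- (pow2_abs (x - p)); apply pow_incr; lra).
    lra. }
  assert (I4 : RInt D (t + h / 8) 1 <= 0).
  { apply RInt_nonpos; [unfold t, h; lra | exact DC|]. intros x Hx.
    apply Hc_closer; unfold t, h in *; lra. }
  assert (0 < h) by (unfold h; lra).
  assert (0 < h * h * h) by (apply Rmult_lt_0_compat; [apply Rmult_lt_0_compat|]; lra).
  lra.
Qed.

Lemma left_neighbour_far : 0 < l < 1/2 -> l / 2 <= 2 * l - a.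
Proof.
  intros Hl. set (b := 2 * l - a). apply Rnot_lt_le. intros Hb_near.
  assert (Hb : In b alpha) by (apply left_in; lra).
  assert (Hnew : ~ In (l / 2) alpha).
  { intros Hin. destruct (alpha_outside_cell _ Hin) as [|[|]]; unfold b in *; lra. }
  pose proof (optimal_replace_excess n alpha b (l / 2) alpha_opt Hb Hnew) as E.
  set (D := excess (replace_point b (l / 2) alpha) alpha) in *.
  assert (DC : forall x, continuous D x) by (intros; apply continuous_excess).
  assert (Ha_closer : forall x, l <= x -> D x <= 0).
  { intros x Hx. apply (excess_replace_nonpos b (l / 2) alpha a); [exact a_in | unfold b; lra |].
    apply closer_right; unfold b; lra. }
  rewrite (RInt_split D 0 l (1/2)) in E by exact DC.
  assert (I1 : RInt D 0 l <= sqdiff_integral (l / 2) b 0 l).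
  { apply RInt_le_sqdiff; [lra | exact DC|]. intros x Hx.
    destruct (Rle_dec x b).
    - apply excess_replace_le; [exact Hb | apply closer_left; lra].
    - unfold D, excess. pose proof (mindist_replace_new b (l / 2) alpha x).
      rewrite (mindist_nearest alpha b x Hb); [lra|].
      intros p Hp. destruct (alpha_outside_cell p Hp) as [|[->|]].
      + apply closer_right; unfold b in *; lra.
      + apply closer_left; unfold b in *; lra.
      + apply closer_left; unfold b in *; lra. }
  assert (I2 : RInt D l (1/2) <= 0).
  { apply RInt_nonpos; [lra | exact DC|]. intros x Hx. apply Ha_closer; lra. }
  assert (I3 : RInt D (3/4) 1 <= 0).
  { apply RInt_nonpos; [lra | exact DC|]. intros x Hx. apply Ha_closer; lra. }
  unfold sqdiff_integral in I1.
  assert (0 < l * (l / 2 - b) ^ 2) by (apply Rmult_lt_0_compat; [lra | nra]).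
  nra.
Qed.

Lemma right_neighbour_near : 3/4 < r < 1 -> 2 * r - a <= (r + 1) / 2.
Proof.
  intros Hr. set (c := 2 * r - a). apply Rnot_lt_le. intros Hc_far.
  assert (Hc : In c alpha) by (apply right_in; lra).
  assert (Hnew : ~ In ((r + 1) / 2) alpha).
  { intros Hin. destruct (alpha_outside_cell _ Hin) as [|[|]]; unfold c in *; lra. }
  pose proof (optimal_replace_excess n alpha c ((r + 1) / 2) alpha_opt Hc Hnew) as E.
  set (D := excess (replace_point c ((r + 1) / 2) alpha) alpha) in *.
  assert (DC : forall x, continuous D x) by (intros; apply continuous_excess).
  assert (Ha_closer : forall x, x <= r -> D x <= 0).
  { intros x Hx.
    apply (excess_replace_nonpos c ((r + 1) / 2) alpha a); [exact a_in | unfold c; lra |].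
    apply closer_left; unfold c; lra. }
  rewrite (RInt_split D (3/4) r 1) in E by exact DC.
  assert (I1 : RInt D r 1 <= sqdiff_integral ((r + 1) / 2) c r 1).
  { apply RInt_le_sqdiff; [lra | exact DC|]. intros x Hx.
    destruct (Rle_dec c x).
    - apply excess_replace_le; [exact Hc | apply closer_right; lra].
    - unfold D, excess. pose proof (mindist_replace_new c ((r + 1) / 2) alpha x).
      rewrite (mindist_nearest alpha c x Hc); [lra|].
      intros p Hp. destruct (alpha_outside_cell p Hp) as [|[->|]].
      + apply closer_right; unfold c in *; lra.
      + apply closer_right; unfold c in *; lra.
      + apply closer_left; unfold c in *; lra. }
  assert (I2 : RInt D (3/4) r <= 0).
  { apply RInt_nonpos; [lra | exact DC|]. intros x Hx. apply Ha_closer; lra. }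
  assert (I3 : RInt D 0 (1/2) <= 0).
  { apply RInt_nonpos; [lra | exact DC|]. intros x Hx. apply Ha_closer; lra. }
  unfold sqdiff_integral in I1.
  assert (0 < (1 - r) * (c - (r + 1) / 2) ^ 2) by (apply Rmult_lt_0_compat; [lra | nra]).
  nra.
Qed.

Lemma voronoi_cell_absurd : False.
Proof.
  destruct lc_spec as [Hlc [Hlc1 Hlc2]]. destruct rc_spec as [Hrc [Hrc1 Hrc2]].
  assert (HM : 0 < 3/2 * (1/2 - lc) + (rc - 3/4)).
  { destruct cell_meets_support; unfold lc, rc, Rmax, Rmin in *; repeat destruct Rle_dec; lra. }
  pose proof (a_centroid HM) as Hcentroid.
  destruct (Req_dec lc (1/2)) as [Hlc_half|]; [rewrite Hlc_half in Hcentroid; nra|].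
  destruct (Req_dec rc (3/4)) as [Hrc_low|]; [rewrite Hrc_low in Hcentroid; nra|].
  destruct (Req_dec lc 0) as [Hlc0|]; [rewrite Hlc0 in Hcentroid; nra|].
  assert (Hl : lc = l) by lra. rewrite Hl in Hcentroid.
  pose proof (left_neighbour_far ltac:(lra)) as Hb.
  destruct (Req_dec rc 1) as [Hrc1'|]; [rewrite Hrc1' in Hcentroid; nra|].
  assert (Hr : rc = r) by lra. rewrite Hr in Hcentroid.
  apply (two_sided_cell_absurd a l r); [lra | lra | lra | exact Hcentroid | |].
  { apply right_neighbour_near; lra. }
  set (a' := (3/4 + r) / 2).
  assert (Hmove : 0 <= 3/2 * sqdiff_integral (2 * l - a) a lc (1/2)
                       + sqdiff_integral a' a (3/4) rc).
  { apply (move_a_excess a'); [unfold a'; lra | unfold a'; lra | intros x Hx | intros x _].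
    - apply mindist_replace_other; [apply left_in; lra | lra].
    - apply mindist_replace_new. }
  now rewrite Hl, Hr in Hmove.
Qed.

End VoronoiCell.

Theorem proposition3p6 :
  forall (n : nat) (alpha : list R),
    (2 <= n)%nat ->
    optimal_n_means n alpha ->
    forall a : R, In a alpha -> ~ (1/2 < a < 3/4).
Proof.
  intros n alpha _ Hopt a Ha_in Ha.
  destruct (left_cell_boundary alpha a 0) as [l [Hla [Hleft Hl_in]]].
  destruct (right_cell_boundary alpha a 1) as [r [Har [Hright Hr_in]]].
  apply (voronoi_cell_absurd n alpha a l r); auto.
  intros p Hp. destruct (Rtotal_order p a) as [Hlt | [Heq | Hgt]]; auto.
Qed.
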